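(* Fix an integer $L\ge 2$, parameters $w_1,w_2,\alpha>0$, $f_1,f_2\in\mathbb{R}$ with $|f_i|\le w_i$, and $\gamma\in\mathbb{R}$ with $|\gamma|\le\alpha$. For all $\rho_1,\rho_2\ge 0$, the product probability measure on $(\mathbb{N}_0^2)^{\mathbb{Z}_L}$ under which all $n^1_k,n^2_k$ ($k\in\mathbb{Z}_L$) are independent, with $n^1_k\sim\mathrm{Poisson}(\rho_1)$ and $n^2_k\sim\mathrm{Poisson}(\rho_2)$, i.e. $$\mu(\eta)=\prod_{k\in\mathbb{Z}_L}\frac{\rho_1^{n^1_k}e^{-\rho_1}}{n^1_k!}\,\frac{\rho_2^{n^2_k}e^{-\rho_2}}{n^2_k!},$$ is an invariant (stationary) measure of the two-lane lattice gas defined in the context. It is also translation invariant.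
   Context: Two-lane lattice gas on the discrete torus $\mathbb{Z}_L=\mathbb{Z}/L\mathbb{Z}$. A configuration is $\eta=(n^1_k,n^2_k)_{k\in\mathbb{Z}_L}\in(\mathbb{N}_0^2)^{\mathbb{Z}_L}$, where $n^i_k$ is the number of particles of lane $i\in\{1,2\}$ at site $k$. Parameters: $w_1,w_2,\alpha>0$, $f_1,f_2\in\mathbb{R}$ with $|f_i|\le w_i$, $\gamma\in\mathbb{R}$ with $|\gamma|\le\alpha$. Set $r_i=\tfrac12(w_i+f_i)$, $\ell_i=\tfrac12(w_i-f_i)$, $g^\pm=\tfrac12(\alpha\pm\gamma)$ (all nonnegative), and $\bar n^i_k=\tfrac12(n^i_k+n^i_{k+1})$. The process is the continuous-time Markov chain in which, for each $k\in\mathbb{Z}_L$: one lane-1 particle moves from $k$ to $k+1$ at rate $n^1_k\,(r_1+g^+\bar n^2_k)$; one lane-1 particle moves from $k+1$ to $k$ at rate $n^1_{k+1}\,(\ell_1+g^-\bar n^2_k)$; one lane-2 particle moves from $k$ to $k+1$ at rate $n^2_k\,(r_2+g^+\bar n^1_k)$; one lane-2 particle moves from $k+1$ to $k$ at rate $n^2_{k+1}\,(\ell_2+g^-\bar n^1_k)$. (Thus each particle jumps independently of the other particles of its own lane, with rates depending on the occupation of the other lane on the same pair of sites.) A measure is invariant if it is stationary under this dynamics. *)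

From Stdlib Require Import Reals Lra Arith.
Open Scope R_scope.

Inductive lane := L1 | L2.

Definition other (i : lane) : lane := match i with L1 => L2 | L2 => L1 end.

Definition lane_eqb (i j : lane) : bool :=
  match i, j with L1, L1 | L2, L2 => true | _, _ => false end.

(* A configuration: eta i k = n^i_k, number of lane-i particles at site k.
   Sites of Z_L are represented by 0..L-1; values at k >= L are never used. *)
Definition config := lane -> nat -> nat.

Definition nxt (L k : nat) : nat := Nat.modulo (S k) L.

Record params := mkParams { w1 : R; w2 : R; f1 : R; f2 : R; alpha : R; gamma : R }.

Definition w (p : params) (i : lane) : R := match i with L1 => w1 p | L2 => w2 p end.
Definition f (p : params) (i : lane) : R := match i with L1 => f1 p | L2 => f2 p end.
Definition rr (p : params) (i : lane) : R := (w p i + f p i) / 2.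
Definition ll (p : params) (i : lane) : R := (w p i - f p i) / 2.
Definition gp (p : params) : R := (alpha p + gamma p) / 2.
Definition gm (p : params) : R := (alpha p - gamma p) / 2.

Definition nbar (L : nat) (eta : config) (i : lane) (k : nat) : R :=
  (INR (eta i k) + INR (eta i (nxt L k))) / 2.

Definition upd (eta : config) (i : lane) (k : nat) (v : nat) : config :=
  fun j m => if andb (lane_eqb j i) (Nat.eqb m k) then v else eta j m.

Definition move (eta : config) (i : lane) (a b : nat) : config :=
  upd (upd eta i a (eta i a - 1)%nat) i b (eta i b + 1)%nat.

(* Transitions are labelled by (lane i, bond k, direction). *)
Inductive dir := Right | Left.

Definition src (L : nat) (d : dir) (k : nat) : nat :=
  match d with Right => k | Left => nxt L k end.
Definition dst (L : nat) (d : dir) (k : nat) : nat :=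
  match d with Right => nxt L k | Left => k end.

Definition rate (p : params) (L : nat) (eta : config) (i : lane) (k : nat) (d : dir) : R :=
  match d with
  | Right => INR (eta i k) * (rr p i + gp p * nbar L eta (other i) k)
  | Left  => INR (eta i (nxt L k)) * (ll p i + gm p * nbar L eta (other i) k)
  end.

Definition target (L : nat) (eta : config) (i : lane) (k : nat) (d : dir) : config :=
  move eta i (src L d k) (dst L d k).

Fixpoint sumk (n : nat) (F : nat -> R) : R :=
  match n with O => 0 | S m => sumk m F + F m end.
Fixpoint prodk (n : nat) (F : nat -> R) : R :=
  match n with O => 1 | S m => prodk m F * F m end.

Definition sum_labels (L : nat) (F : lane -> nat -> dir -> R) : R :=
  sumk L (fun k => F L1 k Right + F L1 k Left + F L2 k Right + F L2 k Left).

Definition out_rate (p : params) (L : nat) (eta : config) : R :=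
  sum_labels L (fun i k d => rate p L eta i k d).

(* Probability flux into eta under the weight mu: sum over labels l and over
   the (unique, if it exists) configuration eta' with target eta' l = eta,
   namely eta' = eta with one lane-i particle moved back from dst to src;
   it exists iff eta has a lane-i particle at dst. *)
Definition in_flux (p : params) (L : nat) (mu : config -> R) (eta : config) : R :=
  sum_labels L (fun i k d =>
    if Nat.leb 1 (eta i (dst L d k)) then
      let eta' := move eta i (dst L d k) (src L d k) in
      mu eta' * rate p L eta' i k d
    else 0).

(* Invariance (stationarity) of mu: global balance / master equation
   d/dt mu_t(eta) = in_flux - mu(eta) * out_rate = 0 for every configuration. *)
Definition invariant (p : params) (L : nat) (mu : config -> R) : Prop :=
  forall eta : config, in_flux p L mu eta = mu eta * out_rate p L eta.

Definition shift (L : nat) (eta : config) : config := fun i k => eta i (nxt L k).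

Definition translation_invariant (L : nat) (mu : config -> R) : Prop :=
  forall eta : config, mu (shift L eta) = mu eta.

Definition poisson (rho : R) (n : nat) : R := rho ^ n * exp (- rho) / INR (fact n).

Definition poisson_product (L : nat) (rho1 rho2 : R) (eta : config) : R :=
  prodk L (fun k => poisson rho1 (eta L1 k) * poisson rho2 (eta L2 k)).

From Stdlib Require Import Reals Lia Arith.
Open Scope R_scope.

(* Under the product Poisson measure mu, moving one lane-i particle from site
   b to site a multiplies the weight by n^i_b / (n^i_a + 1).  Every jump rate is
   the number of particles at the source times a factor that depends only on
   the other lane, which the move leaves unchanged.  Hence the flux into eta
   along a transition equals mu(eta) times n_dst * c, while the exit rate along
   it is n_src * c, and global balance reduces to a sum over bonds of
   (n_dst - n_src) * c = 0.  On the bond (k, k+1) this summand is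
   Phi(k+1) - Phi(k) with Phi(j) = f_1 n^1_j + f_2 n^2_j + gamma n^1_j n^2_j,
   so the sum over Z_L telescopes to 0.  Translation invariance is the
   invariance of a product over Z_L under rotation. *)

Lemma sumk_ext n F G : (forall k, (k < n)%nat -> F k = G k) -> sumk n F = sumk n G.
Proof.
  induction n as [|n IH]; intros E; simpl; [reflexivity|].
  rewrite IH by (intros; apply E; lia). rewrite E by lia. reflexivity.
Qed.

Lemma prodk_ext n F G : (forall k, (k < n)%nat -> F k = G k) -> prodk n F = prodk n G.
Proof.
  induction n as [|n IH]; intros E; simpl; [reflexivity|].
  rewrite IH by (intros; apply E; lia). rewrite E by lia. reflexivity.
Qed.

Lemma sumk_add n F G : sumk n (fun k => F k + G k) = sumk n F + sumk n G.
Proof. induction n as [|n IH]; simpl; [ring|]. rewrite IH; ring. Qed.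

Lemma sumk_sub n F G : sumk n (fun k => F k - G k) = sumk n F - sumk n G.
Proof. induction n as [|n IH]; simpl; [ring|]. rewrite IH; ring. Qed.

Lemma sumk_scal n c F : sumk n (fun k => c * F k) = c * sumk n F.
Proof. induction n as [|n IH]; simpl; [ring|]. rewrite IH; ring. Qed.

Lemma sumk_Sl n F : sumk (S n) F = F 0%nat + sumk n (fun k => F (S k)).
Proof. induction n as [|n IH]; simpl in *; [ring|]. rewrite IH; ring. Qed.

Lemma prodk_Sl n F : prodk (S n) F = F 0%nat * prodk n (fun k => F (S k)).
Proof. induction n as [|n IH]; simpl in *; [ring|]. rewrite IH; ring. Qed.

Lemma nxt_last n : nxt (S n) n = 0%nat.
Proof. apply Nat.Div0.mod_same. Qed.

Lemma nxt_small L k : (S k < L)%nat -> nxt L k = S k.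
Proof. intros Hk. apply Nat.mod_small, Hk. Qed.

Lemma nxt_lt L k : (0 < L)%nat -> (nxt L k < L)%nat.
Proof. intros HL. apply Nat.mod_upper_bound. lia. Qed.

Lemma nxt_neq L k : (2 <= L)%nat -> (k < L)%nat -> nxt L k <> k.
Proof.
  intros HL Hk. destruct (Nat.eq_dec (S k) L) as [<-|Hne].
  - rewrite nxt_last. lia.
  - rewrite nxt_small by lia. lia.
Qed.

Lemma sumk_rotate L h : sumk L (fun k => h (nxt L k)) = sumk L h.
Proof.
  destruct L as [|n]; [reflexivity|].
  rewrite (sumk_Sl n h). cbn [sumk]. rewrite nxt_last.
  rewrite (sumk_ext n _ (fun k => h (S k))) by (intros; rewrite nxt_small by lia; reflexivity).
  ring.
Qed.

Lemma prodk_rotate L h : prodk L (fun k => h (nxt L k)) = prodk L h.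
Proof.
  destruct L as [|n]; [reflexivity|].
  rewrite (prodk_Sl n h). cbn [prodk]. rewrite nxt_last.
  rewrite (prodk_ext n _ (fun k => h (S k))) by (intros; rewrite nxt_small by lia; reflexivity).
  ring.
Qed.

Lemma sumk_telescope n F G H :
  (forall k, (k < n)%nat -> F k = G k + (H (nxt n k) - H k)) -> sumk n F = sumk n G.
Proof. intros E. rewrite (sumk_ext n F _ E), sumk_add, sumk_sub, sumk_rotate. ring. Qed.

Lemma prodk_factor n F a : (a < n)%nat ->
  prodk n F = F a * prodk n (fun j => if Nat.eqb j a then 1 else F j).
Proof.
  induction n as [|n IH]; intros Ha; [lia|]. simpl.
  destruct (Nat.eq_dec a n) as [->|Hne].
  - rewrite Nat.eqb_refl.
    rewrite (prodk_ext n (fun j => if Nat.eqb j n then 1 else F j) F); [ring|].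
    intros k Hk. destruct (Nat.eqb_spec k n); [lia|reflexivity].
  - rewrite IH by lia. destruct (Nat.eqb_spec n a); [lia|]. ring.
Qed.

Lemma prodk_factor2 n F a b : (a < n)%nat -> (b < n)%nat -> a <> b ->
  prodk n F = F a * F b *
    prodk n (fun j => if Nat.eqb j a then 1 else if Nat.eqb j b then 1 else F j).
Proof.
  intros Ha Hb Hab.
  rewrite (prodk_factor n F a Ha), (prodk_factor n _ b Hb).
  destruct (Nat.eqb_spec b a); [lia|]. rewrite Rmult_assoc. do 2 f_equal.
  apply prodk_ext. intros j _.
  destruct (Nat.eqb_spec j b), (Nat.eqb_spec j a); reflexivity.
Qed.

Lemma sum_labels_ext L F G : (forall i k d, (k < L)%nat -> F i k d = G i k d) ->
  sum_labels L F = sum_labels L G.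
Proof. intros E. apply sumk_ext. intros k Hk. rewrite !E by exact Hk. reflexivity. Qed.

Lemma sum_labels_scal L c F : sum_labels L (fun i k d => c * F i k d) = c * sum_labels L F.
Proof. unfold sum_labels. rewrite <- sumk_scal. apply sumk_ext. intros. ring. Qed.

Lemma src_lt L d k : (0 < L)%nat -> (k < L)%nat -> (src L d k < L)%nat.
Proof. destruct d; simpl; auto using nxt_lt. Qed.

Lemma dst_lt L d k : (0 < L)%nat -> (k < L)%nat -> (dst L d k < L)%nat.
Proof. destruct d; simpl; auto using nxt_lt. Qed.

Lemma dst_neq_src L d k : (2 <= L)%nat -> (k < L)%nat -> dst L d k <> src L d k.
Proof. intros HL Hk. destruct d; simpl; [|apply not_eq_sym]; apply nxt_neq; assumption. Qed.

Lemma lane_eqb_refl i : lane_eqb i i = true.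
Proof. destruct i; reflexivity. Qed.

Lemma move_at_src eta i a b : a <> b -> move eta i a b i a = (eta i a - 1)%nat.
Proof.
  intros Hab. unfold move, upd. rewrite lane_eqb_refl, Nat.eqb_refl. simpl.
  destruct (Nat.eqb_spec a b); [contradiction|reflexivity].
Qed.

Lemma move_at_dst eta i a b : move eta i a b i b = S (eta i b).
Proof. unfold move, upd. rewrite lane_eqb_refl, Nat.eqb_refl. simpl. lia. Qed.

Lemma move_other_lane eta i a b j : move eta i a b (other i) j = eta (other i) j.
Proof. destruct i; reflexivity. Qed.

Lemma move_off_sites eta i a b l j : j <> a -> j <> b -> move eta i a b l j = eta l j.
Proof.
  intros Ha Hb. unfold move, upd. destruct (lane_eqb l i); [|reflexivity].
  destruct (Nat.eqb_spec j b), (Nat.eqb_spec j a); simpl; congruence.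
Qed.

Definition jump_coeff (p : params) (L : nat) (eta : config) (i : lane) (k : nat) (d : dir) : R :=
  match d with
  | Right => rr p i + gp p * nbar L eta (other i) k
  | Left => ll p i + gm p * nbar L eta (other i) k
  end.

Lemma rate_jump_coeff p L eta i k d :
  rate p L eta i k d = INR (eta i (src L d k)) * jump_coeff p L eta i k d.
Proof. destruct d; reflexivity. Qed.

Lemma jump_coeff_move p L eta i a b k d :
  jump_coeff p L (move eta i a b) i k d = jump_coeff p L eta i k d.
Proof. destruct d; unfold jump_coeff, nbar; rewrite !move_other_lane; reflexivity. Qed.

Lemma poisson_S rho n : poisson rho (S n) * INR (S n) = rho * poisson rho n.
Proof.
  unfold poisson. change (fact (S n)) with (S n * fact n)%nat. rewrite mult_INR.
  simpl pow. field. split; [apply INR_fact_neq_0 | apply not_0_INR; lia].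
Qed.

Definition density (rho1 rho2 : R) (i : lane) : R :=
  match i with L1 => rho1 | L2 => rho2 end.

Definition site_weight (rho1 rho2 : R) (eta : config) (j : nat) : R :=
  poisson rho1 (eta L1 j) * poisson rho2 (eta L2 j).

Lemma site_weight_lane rho1 rho2 eta i j :
  site_weight rho1 rho2 eta j =
  poisson (density rho1 rho2 i) (eta i j) *
  poisson (density rho1 rho2 (other i)) (eta (other i) j).
Proof. destruct i; unfold site_weight; simpl; ring. Qed.

Lemma poisson_product_move L rho1 rho2 eta i a b m :
  (a < L)%nat -> (b < L)%nat -> a <> b -> eta i b = S m ->
  poisson_product L rho1 rho2 (move eta i b a) * INR (S (eta i a)) =
  poisson_product L rho1 rho2 eta * INR (eta i b).
Proof.
  intros Ha Hb Hab Em. set (eta' := move eta i b a).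
  unfold poisson_product. fold (site_weight rho1 rho2 eta') (site_weight rho1 rho2 eta).
  rewrite (prodk_factor2 L _ a b Ha Hb Hab), (prodk_factor2 L (site_weight rho1 rho2 eta) a b Ha Hb Hab).
  set (rest := prodk L _) at 2.
  replace (prodk L _) with rest.
  2:{ apply prodk_ext. intros j _.
      destruct (Nat.eqb_spec j a), (Nat.eqb_spec j b); try reflexivity.
      unfold site_weight, eta'. rewrite !move_off_sites by assumption. reflexivity. }
  rewrite !(site_weight_lane rho1 rho2 _ i).
  unfold eta'. rewrite move_at_dst, move_at_src, !move_other_lane, Em by congruence.
  replace (S m - 1)%nat with m by lia.
  set (rho := density rho1 rho2 i).
  set (q := fun j => poisson (density rho1 rho2 (other i)) (eta (other i) j)).
  fold (q a) (q b).
  transitivity (rest * q a * q b * poisson rho m * (poisson rho (S (eta i a)) * INR (S (eta i a))));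
    [ring|].
  transitivity (rest * q a * q b * poisson rho (eta i a) * (poisson rho (S m) * INR (S m)));
    [rewrite !poisson_S; ring | ring].
Qed.

Lemma in_flux_summand p L rho1 rho2 eta i k d : (2 <= L)%nat -> (k < L)%nat ->
  (if Nat.leb 1 (eta i (dst L d k)) then
     let eta' := move eta i (dst L d k) (src L d k) in
     poisson_product L rho1 rho2 eta' * rate p L eta' i k d
   else 0)
  = poisson_product L rho1 rho2 eta * (INR (eta i (dst L d k)) * jump_coeff p L eta i k d).
Proof.
  intros HL Hk.
  destruct (eta i (dst L d k)) as [|m] eqn:Em; [simpl; ring|].
  simpl (Nat.leb 1 (S m)). cbv zeta.
  rewrite rate_jump_coeff, jump_coeff_move, move_at_dst, <- Em, <- !Rmult_assoc.
  rewrite (poisson_product_move L rho1 rho2 eta i) with (m := m);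
    auto using src_lt, dst_lt, not_eq_sym, dst_neq_src with arith.
Qed.

(* The summand on bond k is Phi (k+1) - Phi k, because rr - ll = f and gp - gm = gamma. *)
Lemma balance_telescopes p L eta :
  sum_labels L (fun i k d => INR (eta i (dst L d k)) * jump_coeff p L eta i k d) =
  sum_labels L (fun i k d => INR (eta i (src L d k)) * jump_coeff p L eta i k d).
Proof.
  apply sumk_telescope with
    (H := fun j => INR (eta L1 j) * (rr p L1 - ll p L1) + INR (eta L2 j) * (rr p L2 - ll p L2)
                   + (gp p - gm p) * INR (eta L1 j) * INR (eta L2 j)).
  intros k _. cbv beta iota delta [jump_coeff nbar dst src other].
  field.
Qed.

Theorem proposition2 (L : nat) (p : params) (rho1 rho2 : R) :
  (2 <= L)%nat ->
  0 < w1 p -> 0 < w2 p -> 0 < alpha p ->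
  Rabs (f1 p) <= w1 p -> Rabs (f2 p) <= w2 p -> Rabs (gamma p) <= alpha p ->
  0 <= rho1 -> 0 <= rho2 ->
  invariant p L (poisson_product L rho1 rho2) /\
  translation_invariant L (poisson_product L rho1 rho2).
Proof.
  intros HL _ _ _ _ _ _ _ _. split.
  - intros eta. unfold in_flux, out_rate.
    rewrite (sum_labels_ext L _ (fun i k d => poisson_product L rho1 rho2 eta *
               (INR (eta i (dst L d k)) * jump_coeff p L eta i k d)))
      by (intros; apply in_flux_summand; assumption).
    rewrite (sum_labels_ext L (fun i k d => rate p L eta i k d)
               (fun i k d => INR (eta i (src L d k)) * jump_coeff p L eta i k d))
      by (intros; apply rate_jump_coeff).
    rewrite sum_labels_scal, balance_telescopes. reflexivity.
  - intros eta. apply (prodk_rotate L (site_weight rho1 rho2 eta)).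
Qed.
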